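(* Let $(F,\|\cdot\|_F)$ and $(G,\|\cdot\|_G)$ be two indecomposable finite-dimensional normed spaces over $K$ with $\dim_KF\ge2$, and let $t_1,\dots,t_m,s_1,\dots,s_n>0$. Then $$(K^m,|\cdot|_{t_1}\times\cdots\times|\cdot|_{t_m})\oplus(F,\|\cdot\|_F)\cong(K^n,|\cdot|_{s_1}\times\cdots\times|\cdot|_{s_n})\oplus(G,\|\cdot\|_G)$$ if and only if $(K^m,|\cdot|_{t_1}\times\cdots\times|\cdot|_{t_m})\cong(K^n,|\cdot|_{s_1}\times\cdots\times|\cdot|_{s_n})$ and $(F,\|\cdot\|_F)\cong(G,\|\cdot\|_G)$.
   Context: $K$ is a complete non-archimedean non-trivially valued field which is not spherically complete. $(K^m,|\cdot|_{t_1}\times\cdots\times|\cdot|_{t_m})$ is $K^m$ with norm $\max_it_i|x_i|$; $\oplus$ is the direct sum with max norm; $\cong$ denotes isometric isomorphism. A normed space is decomposable if it is isometrically isomorphic to a direct sum of two nonzero normed spaces, and indecomposable otherwise. *)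

From HB Require Import structures.
From mathcomp Require Import all_boot all_order all_algebra.
From mathcomp Require Import reals.
Set Implicit Arguments. Unset Strict Implicit. Unset Printing Implicit Defensive.
Import Order.TTheory GRing.Theory Num.Theory.
Local Open Scope ring_scope.

Section Defs.
Variables (R : realType) (K : fieldType) (abs : K -> R).

Definition nonarch_abs : Prop :=
  [/\ forall x, 0 <= abs x,
      forall x, abs x = 0 <-> x = 0,
      forall x y, abs (x * y) = abs x * abs y &
      forall x y, abs (x + y) <= Num.max (abs x) (abs y)].

Definition nontrivial_abs : Prop := exists x : K, abs x != 0 /\ abs x != 1.

Definition complete_abs : Prop :=
  forall u : nat -> K,
    (forall e : R, 0 < e -> exists N : nat, forall p q : nat,
        (N <= p)%N -> (N <= q)%N -> abs (u p - u q) < e) ->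
    exists l : K, forall e : R, 0 < e -> exists N : nat, forall p : nat,
        (N <= p)%N -> abs (u p - l) < e.

Definition spherically_complete : Prop :=
  forall (a : nat -> K) (r : nat -> R),
    (forall k, 0 < r k) ->
    (forall k x, abs (x - a k.+1) <= r k.+1 -> abs (x - a k) <= r k) ->
    exists x : K, forall k, abs (x - a k) <= r k.

Definition is_norm (E : lmodType K) (nE : E -> R) : Prop :=
  [/\ forall x, 0 <= nE x,
      forall x, nE x = 0 <-> x = 0,
      forall (a : K) x, nE (a *: x) = abs a * nE x &
      forall x y, nE (x + y) <= Num.max (nE x) (nE y)].

Definition sum_norm (E1 E2 : lmodType K) (n1 : E1 -> R) (n2 : E2 -> R)
  : E1 * E2 -> R := fun x => Num.max (n1 x.1) (n2 x.2).

Definition wnorm (m : nat) (t : 'I_m -> R) : 'rV[K]_m -> R :=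
  fun x => \big[Num.max/0]_(i < m) (t i * abs (x 0 i)).

Definition isometric (E E' : lmodType K) (nE : E -> R) (nE' : E' -> R) : Prop :=
  exists f : E -> E', [/\ linear f, bijective f & forall x, nE' (f x) = nE x].

Definition decomposable (E : lmodType K) (nE : E -> R) : Prop :=
  exists (E1 E2 : lmodType K) (n1 : E1 -> R) (n2 : E2 -> R),
    [/\ is_norm n1, is_norm n2, exists x : E1, x != 0,
        exists y : E2, y != 0 & isometric nE (sum_norm n1 n2)].

Definition indecomposable (E : lmodType K) (nE : E -> R) : Prop :=
  ~ decomposable nE.

End Defs.

(* If an indecomposable space F of dimension at least 2 carried a linear form l
   and a constant c with c |l y| <= ||y|| for all y, with equality at some
   f <> 0, then x |-> (l x / l f, x - (l x / l f) f) would split F isometrically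
   as K f (+) ker l.  Every coordinate of the K^n-part of an isometry
   phi : K^m (+) F -> K^n (+) G on 0 (+) F is such a form, so that part is
   strictly shorter than ||f||, and the corner block beta : F -> G of phi
   preserves norms.  The same holds for phi^-1, hence dim F = dim G and beta is
   an isometric isomorphism; then a |-> phi (a, - beta^-1 (phi (a, 0)).2) lands
   in K^n (+) 0 and gives the isometry K^m ~ K^n. *)

From HB Require Import structures.
From mathcomp Require Import all_boot all_order all_algebra.
From mathcomp Require Import reals.
From mathcomp Require Import zify.
Set Implicit Arguments. Unset Strict Implicit. Unset Printing Implicit Defensive.
Import Order.TTheory GRing.Theory Num.Theory.
Local Open Scope ring_scope.

Definition mklinear (K : fieldType) (U V : lmodType K) (f : U -> V) (hf : linear f)
  : {linear U -> V} := HB.pack f (GRing.isLinear.Build K U V *:%R f hf).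

Section LinearAlgebra.
Variable K : fieldType.

Lemma injective_dimv_le (F G : vectType K) (h : F -> G) :
  linear h -> injective h -> (\dim {:F} <= \dim {:G})%N.
Proof.
move=> hl hinj; pose L := linfun (mklinear hl).
have /eqP kerL : lker L == 0%VS by apply/lker0P => x y; rewrite !lfunE => /hinj.
by rewrite -(limg_dim_eq (f := L)) ?kerL ?capv0 // dimvS ?subvf.
Qed.

Lemma injective_dimv_ge_bijective (F G : vectType K) (h : F -> G) :
  linear h -> injective h -> (\dim {:G} <= \dim {:F})%N -> bijective h.
Proof.
move=> hl hinj dimGF; pose L := linfun (mklinear hl).
have LE x : L x = h x by rewrite lfunE.
have kerL : lker L == 0%VS by apply/lker0P => x y; rewrite !lfunE => /hinj.
have imgL : limg L = fullv.
  apply/eqP; rewrite eqEdim subvf limg_dim_eq ?(eqP kerL) ?capv0 //.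
exists (L^-1)%VF => [x | y]; first by rewrite -LE lker0_lfunK.
by rewrite -LE limg_lfunVK // imgL memvf.
Qed.

End LinearAlgebra.

Section Isometries.
Variables (R : realType) (K : fieldType).

Lemma isometry_inverse (U V : lmodType K) (nU : U -> R) (nV : V -> R)
    (h : U -> V) (g : V -> U) :
  linear h -> cancel h g -> cancel g h -> (forall x, nV (h x) = nU x) ->
  linear g /\ forall y, nU (g y) = nV y.
Proof.
move=> hl hK gK h_norm; split; first exact: (can2_linear (f := mklinear hl)).
by move=> y; rewrite -h_norm gK.
Qed.

Lemma isometric_sum (E F E' F' : lmodType K) (nE : E -> R) (nF : F -> R)
    (nE' : E' -> R) (nF' : F' -> R) :
  isometric nE nE' -> isometric nF nF' ->
  isometric (sum_norm nE nF) (sum_norm nE' nF').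
Proof.
move=> [h [hl [h' hK h'K] h_norm]] [g [gl [g' gK g'K] g_norm]].
exists (fun x => (h x.1, g x.2)); split.
- by move=> a x y; rewrite hl gl.
- by exists (fun y => (h' y.1, g' y.2)) => [] [x1 x2] /=; rewrite ?hK ?gK ?h'K ?g'K.
- by move=> x; rewrite /sum_norm /= h_norm g_norm.
Qed.

End Isometries.

Section Blocks.
Variables (K : fieldType) (E F E' G : lmodType K) (phi : E * F -> E' * G).

Definition block11 a := (phi (a, 0)).1.
Definition block12 f := (phi (0, f)).1.
Definition block21 a := (phi (a, 0)).2.
Definition block22 f := (phi (0, f)).2.

Hypothesis hphi : linear phi.

Lemma block_decomp a f :
  phi (a, f) = (block11 a + block12 f, block21 a + block22 f).
Proof.
have -> : (a, f) = (a, 0) + (0, f) by apply: injective_projections; rewrite /= ?addr0 ?add0r.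
exact: (linearD (mklinear hphi)).
Qed.

Let inlP c (a b : E) : (c *: a + b, 0) = c *: (a, 0) + (b, 0) :> E * F.
Proof. by apply: injective_projections; rewrite /= ?scaler0 ?addr0. Qed.

Let inrP c (f g : F) : (0, c *: f + g) = c *: (0, f) + (0, g) :> E * F.
Proof. by apply: injective_projections; rewrite /= ?scaler0 ?addr0. Qed.

Lemma block11_linear : linear block11.
Proof. by move=> c a b; rewrite /block11 inlP hphi. Qed.

Lemma block12_linear : linear block12.
Proof. by move=> c f g; rewrite /block12 inrP hphi. Qed.

Lemma block22_linear : linear block22.
Proof. by move=> c f g; rewrite /block22 inrP hphi. Qed.

Lemma block22N f : block22 (- f) = - block22 f.
Proof. exact: (raddfN (mklinear block22_linear)). Qed.

End Blocks.

Section NonArchimedean.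
Variables (R : realType) (K : fieldType) (abs : K -> R).
Hypothesis habs : nonarch_abs abs.

Lemma abs0 : abs 0 = 0.
Proof. by case: habs => _ abs_eq0 _ _; apply/abs_eq0. Qed.

Lemma absN1 : abs (-1) = 1.
Proof.
have [abs_ge0 abs_eq0 absM _] := habs.
have abs1 : abs 1 = 1.
  have abs1_neq0 : abs 1 != 0 by apply/eqP => /abs_eq0/eqP; rewrite oner_eq0.
  by apply: (mulfI abs1_neq0); rewrite -absM !mulr1.
have : abs (-1) ^+ 2 = 1 by rewrite expr2 -absM mulrNN mulr1.
move/eqP; rewrite sqrf_eq1 => /orP[/eqP // | /eqP absN1].
by have := abs_ge0 (-1); rewrite absN1 oppr_ge0 ler10.
Qed.

Section Norm.
Variables (E : lmodType K) (nE : E -> R).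
Hypothesis hnE : is_norm abs nE.

Lemma norm_ge0 x : 0 <= nE x.
Proof. by case: hnE. Qed.

Lemma norm0 : nE 0 = 0.
Proof. by case: hnE => _ nE_eq0 _ _; apply/nE_eq0. Qed.

Lemma norm_gt0 x : x != 0 -> 0 < nE x.
Proof.
case: hnE => nE_ge0 nE_eq0 _ _ x0; rewrite lt_neqAle nE_ge0 andbT.
by apply: contra x0 => /eqP/esym/nE_eq0 ->.
Qed.

Lemma normN x : nE (- x) = nE x.
Proof. by case: hnE => _ _ nEZ _; rewrite -scaleN1r nEZ absN1 mul1r. Qed.

Lemma norm_preserving_injective (V : lmodType K) (nV : V -> R) (h : E -> V) :
  linear h -> (forall x, nV (h x) = nE x) -> injective h.
Proof.
move=> hl hn x y hxy; have [_ nE_eq0 _ _] := hnE.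
have hB u v : h (u - v) = h u - h v := linearB (mklinear hl) u v.
have h0 : h 0 = 0 := linear0 (mklinear hl).
by apply/subr0_eq/nE_eq0; rewrite -hn hB hxy subrr -h0 hn norm0.
Qed.

End Norm.

Section AttainedFunctional.
Variables (E : vectType K) (nE : E -> R).
Hypothesis hnE : is_norm abs nE.

Lemma line_is_norm r : 0 < r -> is_norm abs (fun a : K^o => abs a * r).
Proof.
have [abs_ge0 abs_eq0 absM abs_ultra] := habs; move=> r_gt0; split.
- by move=> a; rewrite mulr_ge0 ?abs_ge0 ?ltW.
- move=> a; rewrite -abs_eq0; split => [/eqP|->]; last by rewrite mul0r.
  by rewrite mulf_eq0 (gt_eqF r_gt0) orbF => /eqP.
- by move=> a b; rewrite absM mulrA.
- by move=> a b; rewrite -maxr_pMl ?ler_wpM2r ?(ltW r_gt0).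
Qed.

Lemma subvs_is_norm (U : {vspace E}) :
  is_norm abs (fun u : subvs_of U => nE (vsval u)).
Proof.
have [nE_ge0 nE_eq0 nEZ nE_ultra] := hnE; split => //.
- move=> u; split => [/nE_eq0 u0|->]; last by rewrite linear0 (norm0 hnE).
  by apply: (can_inj vsvalK); rewrite u0 linear0.
- by move=> a u; rewrite linearZ nEZ.
- by move=> u v; rewrite linearD nE_ultra.
Qed.

Variables (l : E -> K^o) (hl : linear l) (c : R) (f : E).
Hypotheses (l_le : forall y, c * abs (l y) <= nE y)
  (l_attained : c * abs (l f) = nE f) (f_neq0 : f != 0).

Let L := linfun (mklinear hl).
Let coef x := l x / l f.
Let lB x y : l (x - y) = l x - l y := linearB (mklinear hl) x y.
Let lZ a x : l (a *: x) = a * l x := linearZZ (mklinear hl) a x.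
Let lP a x y : l (a *: x + y) = a * l x + l y := hl a x y.

Let lf_neq0 : l f != 0.
Proof.
apply: contraTneq (norm_gt0 hnE f_neq0) => lf0.
by rewrite -l_attained lf0 abs0 mulr0 ltxx.
Qed.

Let coefK x : coef x * l f = l x.
Proof. exact: mulfVK. Qed.

Lemma attained_split_norm x :
  nE x = Num.max (abs (coef x) * nE f) (nE (x - coef x *: f)).
Proof.
have [_ _ nEZ nE_ultra] := hnE; have [_ _ absM _] := habs.
have le_x : abs (coef x) * nE f <= nE x.
  by rewrite -l_attained mulrCA -absM coefK.
apply/le_anti; rewrite ge_max le_x /=; apply/andP; split.
  by rewrite -{1}(subrK (coef x *: f) x) -nEZ maxC nE_ultra.
by rewrite (le_trans (nE_ultra _ _)) // ge_max lexx (normN hnE) nEZ.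
Qed.

Lemma isometric_attained_split :
  isometric nE (sum_norm (fun a : K^o => abs a * nE f)
                         (fun u : subvs_of (lker L) => nE (vsval u))).
Proof.
pose g (p : K^o * subvs_of (lker L)) := p.1 *: f + vsval p.2.
have g_lin : linear g.
  move=> a p q; rewrite /g linearP /= scalerDr addrACA.
  by rewrite scalerA scalerDl.
pose proj x := (coef x : K^o, vsproj (lker L) (x - coef x *: f)).
have ker_rest x : x - coef x *: f \in lker L.
  by rewrite memv_ker lfunE /= lB lZ coefK subrr.
have projK : cancel proj g.
  by move=> x; rewrite /g /= vsprojK // addrC subrK.
have gK : cancel g proj.
  move=> [a u]; have lu : l (vsval u) = 0.
    by have := subvsP u; rewrite memv_ker lfunE => /eqP.
  have coef_g : coef (g (a, u)) = a.
    by rewrite /coef /g lP lu addr0 mulfK.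
  by rewrite /proj coef_g /g /= addrC addKr vsvalK.
exists proj; split; first exact: (can2_linear (f := mklinear g_lin)).
  by exists g.
by move=> x; rewrite /sum_norm /= vsprojK // -attained_split_norm.
Qed.

Lemma attained_functional_decomposable :
  (2 <= \dim {:E})%N -> decomposable abs nE.
Proof.
move=> dimE; have [nf_gt0 dim_ker_gt0] : 0 < nE f /\ (0 < \dim (lker L))%N.
  split; first exact: norm_gt0.
  have := limg_ker_dim L fullv; rewrite capfv.
  have : (\dim (limg L) <= 1)%N by rewrite (leq_trans (dimvS (subvf _))) ?dimvf.
  by move: dimE; lia.
exists K^o, (subvs_of (lker L)), (fun a : K^o => abs a * nE f),
  (fun u : subvs_of (lker L) => nE (vsval u)).
split; [exact: line_is_norm | exact: subvs_is_norm | | |].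
- by exists 1; rewrite oner_eq0.
- exists (vsproj (lker L) (vpick (lker L))).
  rewrite -(inj_eq (can_inj vsvalK)) linear0 vsprojK ?memv_pick //.
  by rewrite vpick0 -dimv_eq0 -lt0n.
- exact: isometric_attained_split.
Qed.

End AttainedFunctional.

Lemma indecomposable_functional_lt (E : vectType K) (nE : E -> R)
    (l : E -> K^o) (c : R) (f : E) :
  is_norm abs nE -> indecomposable abs nE -> (2 <= \dim {:E})%N ->
  linear l -> (forall y, c * abs (l y) <= nE y) -> f != 0 ->
  c * abs (l f) < nE f.
Proof.
move=> hnE hiE dimE hl l_le f0; rewrite lt_neqAle l_le andbT.
apply/eqP => l_attained.
exact/hiE/(attained_functional_decomposable hnE hl l_le l_attained f0).
Qed.

Section WeightedNorm.
Variables (m : nat) (t : 'I_m -> R).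

Lemma wnorm_ge0 x : 0 <= wnorm abs t x.
Proof. by rewrite /wnorm bigmax_idl le_max lexx. Qed.

Lemma wnorm0 : wnorm abs t 0 = 0.
Proof.
apply/le_anti; rewrite wnorm_ge0 andbT.
by apply: bigmax_le => // i _; rewrite mxE abs0 mulr0.
Qed.

Lemma wnorm_coord_le (x : 'rV_m) j : t j * abs (x 0 j) <= wnorm abs t x.
Proof. exact: (le_bigmax 0 (fun i => t i * abs (x 0 i))). Qed.

Lemma indecomposable_wnorm_lt (F : vectType K) (nF : F -> R) (T : F -> 'rV_m) f :
  is_norm abs nF -> indecomposable abs nF -> (2 <= \dim {:F})%N ->
  linear T -> (forall y, wnorm abs t (T y) <= nF y) -> f != 0 ->
  wnorm abs t (T f) < nF f.
Proof.
move=> hnF hiF dimF hT T_le f0; apply/bigmax_ltP; split => [|j _].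
  exact: norm_gt0.
have coord_lin : linear (fun y => T y 0 j : K^o) by move=> a x y; rewrite hT !mxE.
apply: indecomposable_functional_lt coord_lin _ f0 => // y.
exact: le_trans (wnorm_coord_le _ j) (T_le y).
Qed.

End WeightedNorm.

Lemma block22_norm (F G : vectType K) (nF : F -> R) (nG : G -> R)
    (n n' : nat) (s : 'I_n -> R) (s' : 'I_n' -> R)
    (phi : 'rV_n * F -> 'rV_n' * G) :
  is_norm abs nF -> is_norm abs nG -> indecomposable abs nF ->
  (2 <= \dim {:F})%N -> linear phi ->
  (forall x, sum_norm (wnorm abs s') nG (phi x) = sum_norm (wnorm abs s) nF x) ->
  forall f, nG (block22 phi f) = nF f.
Proof.
move=> hnF hnG hiF dimF hphi phi_norm f.
have split_norm y : Num.max (wnorm abs s' (block12 phi y)) (nG (block22 phi y)) = nF y.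
  by have := phi_norm (0, y); rewrite /sum_norm /= wnorm0 (max_r (norm_ge0 hnF y)).
have [-> | f0] := eqVneq f 0.
  by apply/le_anti; rewrite -{1}(split_norm 0) le_max lexx orbT norm0 ?norm_ge0.
have block12_le y : wnorm abs s' (block12 phi y) <= nF y.
  by rewrite -split_norm le_max lexx.
have := indecomposable_wnorm_lt hnF hiF dimF (block12_linear hphi) block12_le f0.
rewrite -(split_norm f); set w := wnorm _ _ _; set g := nG _.
by case: (leP w g) => // _; rewrite ltxx.
Qed.

Section SumCancellation.
Variables (E F E' G : lmodType K).
Variables (nE : E -> R) (nF : F -> R) (nE' : E' -> R) (nG : G -> R).
Hypotheses (nE_ge0 : forall a, 0 <= nE a) (nE'_ge0 : forall b, 0 <= nE' b).
Hypotheses (hnF : is_norm abs nF) (hnG : is_norm abs nG).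
Variables (phi : E * F -> E' * G) (psi : E' * G -> E * F) (beta' : G -> F).
Hypotheses (hphi : linear phi) (phiK : cancel phi psi) (psiK : cancel psi phi).
Hypothesis phi_norm : forall x, sum_norm nE' nG (phi x) = sum_norm nE nF x.
Hypotheses (block22K : cancel (block22 phi) beta') (beta'K : cancel beta' (block22 phi)).
Hypothesis block22_isometry : forall f, nG (block22 phi f) = nF f.

(* Correcting [a] by the preimage of its G-component makes [phi] land in E' * 0. *)
Let h a := (phi (a, - beta' (block21 phi a))).1.

Let phi_h a : phi (a, - beta' (block21 phi a)) = (h a, 0).
Proof.
apply: injective_projections => //=.
by rewrite block_decomp //= block22N // beta'K subrr.
Qed.

Let hK : cancel h (block11 psi).
Proof. by move=> a; rewrite /block11 -phi_h phiK. Qed.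

Let block11K : cancel (block11 psi) h.
Proof.
move=> b; rewrite /block11; case psi_b: (psi (b, 0)) => [a f] /=.
have /(congr1 snd) : phi (a, f) = (b, 0) by rewrite -psi_b psiK.
rewrite block_decomp //= => /eqP; rewrite addr_eq0 => /eqP block21_a.
rewrite /h block21_a -block22N // block22K opprK.
by rewrite -psi_b psiK.
Qed.

Let h_norm a : nE' (h a) = nE a.
Proof.
have := phi_norm (a, - beta' (block21 phi a)).
rewrite phi_h /sum_norm /= norm0 // (max_l (nE'_ge0 _)) normN // => ->.
apply: max_l; rewrite -block22_isometry beta'K.
have := phi_norm (a, 0); rewrite /sum_norm /= norm0 // (max_l (nE_ge0 _)) => <-.
by rewrite le_max lexx orbT.
Qed.

Lemma isometric_sum_cancel : isometric nE nE' /\ isometric nF nG.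
Proof.
have [hpsi _] := isometry_inverse hphi phiK psiK phi_norm.
split; last by exists (block22 phi); split; [exact: block22_linear | exists beta' |].
exists h; split => //; last by exists (block11 psi).
exact: (can2_linear (f := mklinear (block11_linear hpsi)) block11K hK).
Qed.

End SumCancellation.
End NonArchimedean.

Theorem mainTheorem14 (R : realType) (K : fieldType) (abs : K -> R)
  (habs : nonarch_abs abs) (hnt : nontrivial_abs abs) (hc : complete_abs abs)
  (hsc : ~ spherically_complete abs)
  (F G : vectType K) (nF : F -> R) (nG : G -> R)
  (hnF : is_norm abs nF) (hnG : is_norm abs nG)
  (hiF : indecomposable abs nF) (hiG : indecomposable abs nG)
  (hdim : (2 <= \dim (fullv : {vspace F}))%N)
  (m n : nat) (t : 'I_m -> R) (s : 'I_n -> R)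
  (ht : forall i, 0 < t i) (hs : forall j, 0 < s j) :
  isometric (sum_norm (wnorm abs t) nF) (sum_norm (wnorm abs s) nG)
  <-> isometric (wnorm abs t) (wnorm abs s) /\ isometric nF nG.
Proof.
(* The hypotheses on K only ensure that indecomposable spaces of dimension at
   least 2 exist. *)
split=> [[phi [hphi [psi phiK psiK] phi_norm]] | [iso_wnorm iso_FG]]; last first.
  exact: isometric_sum.
have [hpsi psi_norm] := isometry_inverse hphi phiK psiK phi_norm.
have beta_norm := block22_norm habs hnF hnG hiF hdim hphi phi_norm.
have beta_inj := norm_preserving_injective hnF (block22_linear hphi) beta_norm.
have dimFG := injective_dimv_le (block22_linear hphi) beta_inj.
have beta'_norm := block22_norm habs hnG hnF hiG (leq_trans hdim dimFG) hpsi psi_norm.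
have beta'_inj := norm_preserving_injective hnG (block22_linear hpsi) beta'_norm.
have [beta' betaK beta'K] := injective_dimv_ge_bijective (block22_linear hphi)
  beta_inj (injective_dimv_le (block22_linear hpsi) beta'_inj).
exact: (isometric_sum_cancel habs (wnorm_ge0 abs t) (wnorm_ge0 abs s) hnF hnG
  hphi phiK psiK phi_norm betaK beta'K beta_norm).
Qed.
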